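(* Let $(\mathcal{S}_1,\mathcal{S}_2)$ be an $S$-pair with $|S| = n \ge 3$. Then there is at most one element $s \in S$ with the following property: there exist a subset $D \subseteq S - s$ with $|D| = n-2$ and positive integers $i,j$ with $i+j = n-1$ such that $X \cup \{s\} \in \mathcal{S}_1$ for every $i$-element subset $X$ of $D$, and every $j$-element subset of $D$ lies in $\mathcal{S}_2$.
   Context: Let $S$ be a finite nonempty set and $\mathcal{S}_1, \mathcal{S}_2 \subseteq 2^S$. The pair $(\mathcal{S}_1,\mathcal{S}_2)$ is an $S$-pair if: (S1) for $i=1,2$, if $A,B \in \mathcal{S}_i$ with $B \subset A$ and $|A| = |B|+1$, then every $|B|$-element subset of $A$ lies in $\mathcal{S}_i$; (S2) for $i=1,2$, if $A,B \in \mathcal{S}_i$ with $|A|=|B|$ and $|A\cap B| = |A|-1$, then $A\cup B \in \mathcal{S}_i$; (S3) for $i=1,2$, not every singleton $\{s\}$, $s\in S$, lies in $\mathcal{S}_i$, and $S \notin \mathcal{S}_i$; (S4) for $k = 1,\dots,|S|-1$ and $x\in S$, if every $k$-element subset of $S - x$ lies in $\mathcal{S}_1$, then not every $(|S|-k)$-element subset of $S-x$ lies in $\mathcal{S}_2$. *)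

From mathcomp Require Import all_boot.
Set Implicit Arguments. Unset Strict Implicit. Unset Printing Implicit Defensive.

Definition axS1 (S : finType) (F : {set {set S}}) : Prop :=
  forall A B : {set S}, A \in F -> B \in F -> B \proper A -> #|A| = #|B|.+1 ->
    forall C : {set S}, C \subset A -> #|C| = #|B| -> C \in F.

Definition axS2 (S : finType) (F : {set {set S}}) : Prop :=
  forall A B : {set S}, A \in F -> B \in F -> #|A| = #|B| ->
    #|A :&: B| = #|A| - 1 -> A :|: B \in F.

Definition axS3 (S : finType) (F : {set {set S}}) : Prop :=
  (exists s : S, [set s] \notin F) /\ [set: S] \notin F.

Definition axS4 (S : finType) (F1 F2 : {set {set S}}) : Prop :=
  forall (k : nat) (x : S), 1 <= k <= #|S| - 1 ->
    (forall X : {set S}, X \subset [set~ x] -> #|X| = k -> X \in F1) ->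
    ~ (forall X : {set S}, X \subset [set~ x] -> #|X| = #|S| - k -> X \in F2).

Definition S_pair (S : finType) (F1 F2 : {set {set S}}) : Prop :=
  axS1 F1 /\ axS1 F2 /\ axS2 F1 /\ axS2 F2 /\ axS3 F1 /\ axS3 F2 /\ axS4 F1 F2.

Definition special_elt (S : finType) (F1 F2 : {set {set S}}) (s : S) : Prop :=
  exists (D : {set S}) (i j : nat),
    D \subset [set~ s] /\ #|D| = #|S| - 2 /\ 0 < i /\ 0 < j /\ i + j = #|S| - 1 /\
    (forall X : {set S}, X \subset D -> #|X| = i -> s |: X \in F1) /\
    (forall X : {set S}, X \subset D -> #|X| = j -> X \in F2).

From mathcomp Require Import all_boot zify.
Set Implicit Arguments. Unset Strict Implicit. Unset Printing Implicit Defensive.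

(* Suppose s <> t are both special.  A special element s comes with a set
   D = S - {s, u} for some u <> s; by (S2) the conditions on i-subsets and
   j-subsets of D propagate to all larger subsets of D ([cone_up]).  Hence
   s + D = S - u lies in F1, and likewise S - v lies in F1 for the data of t.
   Two distinct co-singletons in F1 would glue by (S2) to S ([axS2_glue]),
   contradicting (S3), so u = v ([coatoms_eq]); put U = S - u.  Gluing
   U - s and U - t gives U in F2.  Using (S1) we then push the closure
   properties down inside U: every subset of U of size > i' is in F1
   ([axS1_cone_down]) and every subset of U of size >= j' is in F2
   ([axS1_down]).  Since i' + 1 + j' = n, this contradicts (S4) for
   k = i' + 1 and x = u. *)

Section Closure.
Variables (S : finType) (F : {set {set S}}).

Lemma axS2_glue (U : {set S}) (a b : S) :
  axS2 F -> a \in U -> b \in U -> a != b ->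
  U :\ a \in F -> U :\ b \in F -> U \in F.
Proof.
move=> hS2 aU bU ab Ua Ub.
have cUa : #|U :\ a| = #|U| - 1 by have := cardsD1 a U; rewrite aU; lia.
have cUb : #|U :\ b| = #|U| - 1 by have := cardsD1 b U; rewrite bU; lia.
have bUa : b \in U :\ a by rewrite !inE eq_sym ab.
have EI : (U :\ a) :&: (U :\ b) = (U :\ a) :\ b.
  by apply/setP=> y; rewrite !inE; case: (y == a); case: (y == b); case: (y \in U).
have EU : (U :\ a) :|: (U :\ b) = U.
  apply/setP=> y; rewrite !inE; case: (eqVneq y a) => [->|ya] /=.
    by rewrite ab aU.
  by case: (y \in U); rewrite ?andbT ?andbF ?orbT.
rewrite -EU; apply: hS2 => //; first by rewrite cUa cUb.
by rewrite EI; have := cardsD1 b (U :\ a); rewrite bUa cUa; lia.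
Qed.

Lemma cone_up (c D : {set S}) (m : nat) :
  axS2 F -> [disjoint c & D] -> 0 < m ->
  (forall X : {set S}, X \subset D -> #|X| = m -> c :|: X \in F) ->
  forall X : {set S}, X \subset D -> m <= #|X| -> c :|: X \in F.
Proof.
move=> hS2 cD m_gt0 hm.
suff hk k : forall X : {set S}, X \subset D -> #|X| = m + k -> c :|: X \in F.
  by move=> X XD hX; apply: (hk (#|X| - m)) => //; lia.
elim: k => [|k IH] X XD hX; first by apply: hm; lia.
have /card_gt1P [x [y [xX yX xy]]] : 1 < #|X| by lia.
have setD1_cone z : z \in X -> (c :|: X) :\ z = c :|: (X :\ z).
  move=> zX; have zc : z \notin c.
    by apply: contraTN (subsetP XD z zX); rewrite disjoint_subset in cD; apply: (subsetP cD).
  by apply/setP=> w; rewrite !inE; case: eqVneq => [->|]; rewrite ?(negbTE zc).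
have IHz z : z \in X -> (c :|: X) :\ z \in F.
  move=> zX; rewrite setD1_cone //; apply: IH; first by rewrite subDset subsetU ?XD ?orbT.
  by have := cardsD1 z X; rewrite zX; lia.
by apply: (axS2_glue (a := x) (b := y)); rewrite ?inE ?xX ?yX ?orbT ?IHz.
Qed.

Lemma coatoms_eq (a b : S) :
  axS2 F -> [set: S] \notin F -> [set~ a] \in F -> [set~ b] \in F -> a = b.
Proof.
move=> hS2 hT Fa Fb; apply/eqP; apply: contraNT hT => ab.
by apply: (axS2_glue (a := a) (b := b)); rewrite ?inE ?setTD.
Qed.

Lemma axS1_cone_down (t : S) (D : {set S}) (m : nat) :
  axS1 F -> t \notin D ->
  (forall X : {set S}, X \subset D -> m <= #|X| -> t |: X \in F) ->
  forall X : {set S}, X \subset t |: D -> m < #|X| -> X \in F.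
Proof.
move=> hS1 tD hm X XtD hX.
have subD (Y : {set S}) : Y \subset X -> t \notin Y -> Y \subset D.
  move=> YX tY; apply/subsetP=> y yY.
  have /setU1P [yt|//] := subsetP XtD y (subsetP YX y yY).
  by rewrite -yt yY in tY.
have [tX|tX] := boolP (t \in X).
  rewrite -(setD1K tX); apply: hm; last by have := cardsD1 t X; rewrite tX; lia.
  by apply: subD; rewrite ?subD1set ?setD11.
have /card_gt0P [w wX] : 0 < #|X| by lia.
have XD := subD X (subxx X) tX.
have wtX : w \in t |: X by rewrite setU1r.
have EB : (t |: X) :\ w = t |: (X :\ w).
  apply/setP=> y; rewrite !inE; case: (eqVneq y t) => [->|] //=.
  by case: eqVneq => // tw; rewrite tw wX in tX.
have cXw : #|X :\ w| = #|X| - 1 by have := cardsD1 w X; rewrite wX; lia.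
have tXw : t \notin X :\ w by rewrite !inE (negbTE tX) andbF.
have AF : t |: X \in F by apply: hm => //; lia.
have BF : (t |: X) :\ w \in F.
  by rewrite EB; apply: hm; [exact: subset_trans (subD1set X w) XD | lia].
apply: (hS1 _ _ AF BF (properD1 wtX)); rewrite ?subsetUr //.
  by rewrite EB !cardsU1 tX tXw cXw; lia.
by rewrite EB cardsU1 tXw cXw; lia.
Qed.

Lemma axS1_down (U : {set S}) (t : S) (m : nat) :
  axS1 F -> t \in U -> U \in F ->
  (forall X : {set S}, X \subset U :\ t -> m <= #|X| -> X \in F) ->
  forall X : {set S}, X \subset U -> m <= #|X| -> X \in F.
Proof.
move=> hS1 tU UF hm.
suff hk k : forall X : {set S}, X \subset U -> m <= #|X| -> #|X| + k = #|U| -> X \in F.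
  by move=> X XU hX; apply: (hk (#|U| - #|X|)) => //; have := subset_leq_card XU; lia.
elim: k => [|k IH] X XU hmX hX.
  by have -> : X = U by apply/eqP; rewrite eqEcard XU; lia.
have [tX|tX] := boolP (t \in X); last first.
  by apply: hm => //; rewrite subsetD1 XU.
have /subsetPn [z zU zX] : ~~ (U \subset X).
  by apply/negP=> /subset_leq_card; lia.
have cA : #|z |: X| = #|X|.+1 by rewrite cardsU1 zX.
have tA : t \in z |: X by rewrite setU1r.
have cB : #|(z |: X) :\ t| = #|X| by have := cardsD1 t (z |: X); rewrite tA cA; lia.
have AF : z |: X \in F by apply: IH; rewrite ?subUset ?sub1set ?zU ?XU //; lia.
apply: (hS1 _ _ AF _ (properD1 tA)); rewrite ?cB ?subsetUr //.
by apply: hm; rewrite ?cB // setSD // subUset sub1set zU XU.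
Qed.

End Closure.

Lemma special_coatom (S : finType) (F1 F2 : {set {set S}}) (s : S) :
  axS2 F1 -> axS2 F2 -> special_elt F1 F2 s ->
  exists u i j, [/\ u != s, 0 < i < #|S| - 1, i + j = #|S| - 1,
    (forall X : {set S}, X \subset [set~ u] :\ s -> i <= #|X| -> s |: X \in F1)
  & (forall X : {set S}, X \subset [set~ u] :\ s -> j <= #|X| -> X \in F2)].
Proof.
move=> hS2F1 hS2F2 [D [i [j [Ds [cD [i0 [j0 [ij [H1 H2]]]]]]]]].
have sD : s \notin D by apply/negP=> /(subsetP Ds); rewrite !inE eqxx.
have /cards1P [u hu] : #|~: (s |: D)| == 1.
  by have := cardsC (s |: D); rewrite cardsU1 sD cD; lia.
have EsD : s |: D = [set~ u] by rewrite -hu setCK.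
have ED : D = [set~ u] :\ s by rewrite -EsD setU1K.
exists u, i, j; split => //; first by rewrite eq_sym -in_setC1 -EsD setU11.
  lia.
  by rewrite -ED; apply: cone_up; rewrite ?disjoints1.
rewrite -ED => X XD hX; rewrite -(set0U X).
apply: (cone_up hS2F2 _ j0 _ XD hX); first by rewrite -setI_eq0 set0I.
by move=> Y YD hY; rewrite set0U; apply: H2.
Qed.

Lemma card_setC1D1 (S : finType) (u s : S) :
  u != s -> #|[set~ u] :\ s| = #|S| - 2.
Proof.
move=> us; have := cardsD1 s [set~ u]; rewrite cardsC1 in_setC1 eq_sym us.
have : 0 < #|S| by apply/card_gt0P; exists s.
lia.
Qed.

Theorem mainTheorem9 (S : finType) (F1 F2 : {set {set S}}) :
  3 <= #|S| -> S_pair F1 F2 ->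
  forall s t : S, special_elt F1 F2 s -> special_elt F1 F2 t -> s = t.
Proof.
move=> _ [F1S1 [F2S1 [F1S2 [F2S2 [[_ F1T] [_ S4]]]]]] s t hs ht.
have [u [i [j [us i_bd ij H1s H2s]]]] := special_coatom F1S2 F2S2 hs.
have [v [i' [j' [vt i_bd' ij' H1t H2t]]]] := special_coatom F1S2 F2S2 ht.
have coatomF1 (w r : S) (k : nat) : w != r -> k <= #|S| - 2 ->
    (forall X : {set S}, X \subset [set~ w] :\ r -> k <= #|X| -> r |: X \in F1) -> [set~ w] \in F1.
  move=> wr hk H; rewrite -(setD1K (_ : r \in [set~ w])) ?in_setC1 1?eq_sym //.
  by apply: H; rewrite ?card_setC1D1.
have uv : u = v by apply: (coatoms_eq F1S2 F1T); apply: coatomF1; try eassumption; lia.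
subst v; apply/eqP; apply: contraT => st.
have tU : t \in [set~ u] by rewrite in_setC1 eq_sym.
have UF2 : [set~ u] \in F2.
  apply: (axS2_glue F2S2 _ tU st); first by rewrite in_setC1 eq_sym.
    by apply: H2s; rewrite ?card_setC1D1 //; lia.
  by apply: H2t; rewrite ?card_setC1D1 //; lia.
case: (S4 i'.+1 u); first lia.
  move=> X XU hX; rewrite -(setD1K tU) in XU.
  by apply: (axS1_cone_down F1S1 _ H1t XU); rewrite ?setD11 ?hX.
move=> X XU hX; apply: (axS1_down F2S1 tU UF2 H2t XU); lia.
Qed.
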